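(* For any tree $T$, $\gamma_{oidR}(T)\ge 2\beta(T)+1$, and this bound is tight (there are trees attaining equality).
   Context: $\beta(T)$ is the vertex cover number of $T$. A DRD function of $G$ is $f:V(G)\to\{0,1,2,3\}$ such that every vertex with value $0$ has a neighbor with value $3$ or two neighbors with value $2$, and every vertex with value $1$ has a neighbor with value at least $2$; it is an OIDRD function if the set of vertices with value $0$ is independent, and $\gamma_{oidR}(G)$ is the minimum weight $\sum_v f(v)$ of an OIDRD function. *)

From mathcomp Require Import all_boot all_order.
Set Implicit Arguments. Unset Strict Implicit. Unset Printing Implicit Defensive.

Section Graphs.
Variable V : finType.
Variable e : rel V.

Definition simple_graph : Prop := symmetric e /\ irreflexive e.

Definition is_cycle (s : seq V) : bool := [&& 2 < size s, uniq s & cycle e s].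

Definition acyclic : Prop := forall s : seq V, ~~ is_cycle s.

Definition connected : Prop := forall x y : V, connect e x y.

Definition is_tree : Prop := [/\ simple_graph, 0 < #|V|, connected & acyclic].

Definition vertex_cover (S : {set V}) : bool :=
  [forall u, forall v, e u v ==> (u \in S) || (v \in S)].

Definition vc_number : nat :=
  #|[arg min_(S < [set: V] | vertex_cover S) #|S|]|.

Definition DRD (f : {ffun V -> 'I_4}) : bool :=
  [forall v,
     ((f v == 0 :> nat) ==>
        ([exists u, e v u && (f u == 3 :> nat)] ||
         [exists u, exists w, [&& u != w, e v u, e v w,
                                  (f u == 2 :> nat) & (f w == 2 :> nat)]]))
  && ((f v == 1 :> nat) ==> [exists u, e v u && (2 <= f u)])].

Definition OIDRD (f : {ffun V -> 'I_4}) : bool :=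
  DRD f && [forall u, forall w,
              [&& (f u == 0 :> nat) & (f w == 0 :> nat)] ==> ~~ e u w].

Definition weight (f : {ffun V -> 'I_4}) : nat := \sum_(v : V) (f v : nat).

Definition two4 : 'I_4 := inord 2.

Definition gamma_oidR : nat :=
  weight [arg min_(f < [ffun => two4] | OIDRD f) weight f].

End Graphs.

From mathcomp Require Import all_boot all_order zify.
Set Implicit Arguments. Unset Strict Implicit. Unset Printing Implicit Defensive.

(* By Konig's theorem for forests (match a leaf with its neighbour and recurse) a tree has
   a matching M and a vertex cover of size |M|, so it suffices to show w(f) >= 2|M| + 1
   for every OIDRD function f.  Charge each vertex v with f(v), plus 1 if v is needy:
   f(v) <= 1 and v has a neighbour of value >= 2 other than its partner in M.  The
   domination conditions give every unmatched vertex charge >= 1 and, together with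
   outer independence, every matched pair charge >= 3; hence w(f) + #needy >= n + |M|.
   A needy vertex owns the edge to such a neighbour; it is not in M and no other vertex
   owns it, since its other end has value >= 2.  So |M| + #needy <= n - 1, and
   w(f) >= 2|M| + 1.  The single edge K2 attains the bound. *)

Section Forest.
Variables (V : finType) (e : rel V).
Hypotheses (e_sym : symmetric e) (e_irr : irreflexive e) (e_acyc : acyclic e).

Lemma edge_neq y z : e y z -> y != z.
Proof. by apply: contraTneq => ->; rewrite e_irr. Qed.

Definition nbrs (A : {set V}) y := [set w in A | e y w].

(* Otherwise the suffix of q starting at w closes a cycle through the last vertex. *)
Lemma last_nbr_index x0 q w :
  uniq q -> sorted e q -> w \in q -> e (last x0 q) w -> (index w q).+2 = size q.
Proof.
move=> uq sq wq; case/splitPr: wq uq sq => p b.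
rewrite cat_uniq index_cat last_cat size_cat => /and3P[_ wNp u_wb] /cat_sorted2[_ p_wb].
rewrite /= in wNp; case/norP: wNp => /negbTE -> _ /= e_lw; rewrite eqxx addn0.
have := e_acyc (w :: b).
rewrite /is_cycle u_wb /= rcons_path -/(sorted e (w :: b)) p_wb e_lw andbT.
by case: b {u_wb p_wb} e_lw => [|c [|d b]] //=; rewrite ?e_irr // => _ _; lia.
Qed.

Lemma card_nbrs_last x0 q :
  uniq q -> sorted e q -> #|[set w | (w \in q) && e (last x0 q) w]| <= 1.
Proof.
move=> uq sq; apply/card_le1_eqP => w1 w2; rewrite !inE => /andP[w1q e1] /andP[w2q e2].
apply: (index_inj x0 w2q w1q).
by have := last_nbr_index uq sq w1q e1; have := last_nbr_index uq sq w2q e2; lia.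
Qed.

Lemma exists_leaf A : A != set0 -> exists2 y, y \in A & #|nbrs A y| <= 1.
Proof.
case/set0Pn => x xA.
(* Grow a path inside A until its last vertex has no new neighbour in A. *)
suff grow k s : #|V| - size s < k -> uniq (x :: s) -> path e x s ->
    {subset x :: s <= A} -> exists2 y, y \in A & #|nbrs A y| <= 1.
  apply: (grow #|V|.+1 [::]) => //; first by rewrite subn0.
  by move=> w; rewrite inE => /eqP->.
elim: k s => [//|k IHk] s lt_k uq ps sA.
have lA : last x s \in A by apply/sA/mem_last.
have [/exists_inP[w wA /andP[e_lw wNs]]|Nw] :=
  boolP [exists w in A, e (last x s) w && (w \notin x :: s)].
  have uq' : uniq (x :: rcons s w) by rewrite -rcons_cons rcons_uniq wNs.
  have ltV : (size s).+2 <= #|V|.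
    by rewrite -(size_rcons s w) -[_.+1]/(size (x :: rcons s w)) -(card_uniqP uq') max_card.
  apply: (IHk (rcons s w)); rewrite ?size_rcons ?rcons_path ?ps ?e_lw //; first lia.
  by move=> v; rewrite -rcons_cons mem_rcons inE => /predU1P[->|/sA].
exists (last x s) => //; apply: leq_trans (card_nbrs_last x uq ps).
apply/subset_leq_card/subsetP => w; rewrite !inE => /andP[wA e_lw]; rewrite e_lw andbT.
by apply: contraNT Nw => wNs; apply/exists_inP; exists w; rewrite ?e_lw.
Qed.

Lemma leaf_set_ind (P : {set V} -> Prop) :
  P set0 ->
  (forall (A : {set V}) y, y \in A -> #|nbrs A y| <= 1 ->
     (forall B : {set V}, B \proper A -> P B) -> P A) ->
  forall A, P A.
Proof.
move=> P0 IH A; elim: {A}_.+1 {-2}A (ltnSn #|A|) => // n IHn A leAn.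
have [->//|/exists_leaf[y yA ly]] := eqVneq A set0.
apply: IH yA ly _ => B /proper_card ltBA; apply: IHn.
exact: leq_trans ltBA leAn.
Qed.

Definition arcs (A : {set V}) := [set p : V * V | [&& p.1 \in A, p.2 \in A & e p.1 p.2]].

Lemma card_arcs A : #|arcs A| <= 2 * #|A| - 2.
Proof.
elim/leaf_set_ind: A => [|A y yA ly IH].
  by rewrite cards0 leqn0 cards_eq0; apply/eqP/setP => p; rewrite !inE.
set N := nbrs A y in ly *.
have sub : arcs A \subset arcs (A :\ y) :|: ((pair y @: N) :|: ((pair^~ y) @: N)).
  apply/subsetP => -[a b]; rewrite !inE /= => /and3P[aA bA eab].
  have [ay|ay] := eqVneq a y.
    by subst a; rewrite (@imset_f _ _ (pair y)) ?orbT // inE bA eab.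
  have [by_|by_] := eqVneq b y; last by rewrite aA bA eab.
  by subst b; rewrite (@imset_f _ _ (pair^~ y)) ?orbT // inE aA e_sym.
have NA : N \subset A :\ y.
  apply/subsetP => w; rewrite !inE => /andP[-> eyw].
  by rewrite andbT; apply: contraTneq eyw => ->; rewrite e_irr.
have card_sub : #|arcs A| <= #|arcs (A :\ y)| + 2 * #|N|.
  apply: leq_trans (subset_leq_card sub) _; apply: leq_trans (leq_card_setU _ _).1 _.
  rewrite leq_add2l mul2n -addnn.
  exact: leq_trans (leq_card_setU _ _).1 (leq_add (leq_imset_card _ _) (leq_imset_card _ _)).
have := IH _ (properD1 yA); have := subset_leq_card NA.
rewrite (cardsD1 y A) yA; lia.
Qed.

Definition moved (mate : V -> V) := [set v | mate v != v].

(* A matching is encoded by the involution exchanging the ends of each matched edge. *)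
Definition matching (mate : V -> V) :=
  involutive mate /\ {in moved mate, forall v, e v (mate v)}.

Lemma moved_mate mate v : involutive mate -> (mate v \in moved mate) = (v \in moved mate).
Proof. by move=> mateK; rewrite !inE mateK eq_sym. Qed.

Definition pair_mate (mate : V -> V) y z v :=
  if v == y then z else if v == z then y else mate v.

Section PairMate.
Variables (mate : V -> V) (y z : V).
Hypotheses (mate_matching : matching mate) (eyz : e y z).
Hypotheses (yNm : y \notin moved mate) (zNm : z \notin moved mate).

Let mateK : involutive mate := proj1 mate_matching.
Let yz : y != z := edge_neq eyz.
Let mate_y : mate y = y. Proof. by apply/eqP; move: yNm; rewrite inE negbK. Qed.
Let mate_z : mate z = z. Proof. by apply/eqP; move: zNm; rewrite inE negbK. Qed.

Lemma pair_mateK : involutive (pair_mate mate y z).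
Proof.
move=> v; rewrite /pair_mate.
have [->|vy] := eqVneq v y; first by rewrite eq_sym (negbTE yz) eqxx.
have [->|vz] := eqVneq v z; first by rewrite eqxx.
have /negbTE-> : mate v != y by apply: contra_neq vy => my; rewrite -[v]mateK my mate_y.
have /negbTE-> : mate v != z by apply: contra_neq vz => mz; rewrite -[v]mateK mz mate_z.
exact: mateK.
Qed.

Lemma moved_pair_mate : moved (pair_mate mate y z) = y |: (z |: moved mate).
Proof.
apply/setP => v; rewrite !inE /pair_mate.
have [->|vy] := eqVneq v y; first by rewrite eq_sym yz.
by have [->|//] := eqVneq v z; rewrite yz.
Qed.

Lemma matching_pair_mate : matching (pair_mate mate y z).
Proof.
have [_ me] := mate_matching; split; first exact: pair_mateK.
move=> v; rewrite moved_pair_mate !inE /pair_mate.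
have [->|_ /=] := eqVneq v y; first by [].
have [->|_ /=] := eqVneq v z; first by rewrite e_sym.
by move=> mv; apply: me; rewrite inE.
Qed.

End PairMate.

Definition covers (A S : {set V}) :=
  {in A &, forall a b, e a b -> (a \in S) || (b \in S)}.

Lemma covers_setU1 A S z : covers (A :\ z) S -> covers A (z |: S).
Proof.
move=> cS a b aA bA eab; rewrite !in_setU1.
have [//|az] := eqVneq a z; have [//|bz] := eqVneq b z; rewrite ?orbT //=.
by apply: cS; rewrite ?inE ?az ?bz.
Qed.

Lemma covers_setD1 A S y : covers (A :\ y) S -> {subset nbrs A y <= S} -> covers A S.
Proof.
move=> cS NS a b aA bA eab.
have [ay|ay] := eqVneq a y; first by subst a; rewrite (NS b) ?orbT // inE bA eab.
have [by_|by_] := eqVneq b y; first by subst b; rewrite (NS a) // inE aA e_sym.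
by apply: cS; rewrite ?inE ?ay ?by_.
Qed.

Lemma forest_konig A : exists S mate,
  [/\ covers A S, matching mate, moved mate \subset A & 2 * #|S| <= #|moved mate|].
Proof.
elim/leaf_set_ind: A => [|A y yA ly IH].
  exists set0, id; split; last by rewrite cards0.
  - by move=> a b; rewrite inE.
  - by split=> // v; rewrite inE eqxx.
  - by apply/subsetP => v; rewrite inE eqxx.
have [N0|[z zN]] := set_0Vmem (nbrs A y).
  have [S [mate [cS mm sub le]]] := IH _ (properD1 yA).
  exists S, mate; split => //; last exact: subset_trans sub (subsetDl _ _).
  by apply: covers_setD1 cS _ => w; rewrite N0 inE.
have := zN; rewrite inE => /andP[zA eyz].
have subA : A :\ y :\ z \subset A := subset_trans (subsetDl _ _) (subsetDl _ _).
have BA : A :\ y :\ z \proper A := sub_proper_trans (subsetDl _ _) (properD1 yA).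
have [S [mate [cS mm sub le]]] := IH _ BA.
have [yNm zNm] : y \notin moved mate /\ z \notin moved mate.
  by split; apply: contraTN isT => /(subsetP sub); rewrite !inE eqxx ?andbF.
exists (z |: S), (pair_mate mate y z); rewrite moved_pair_mate //; split.
- apply: covers_setD1 (covers_setU1 cS) _ => w wN.
  by rewrite -(card_le1_eqP ly w z wN zN) setU11.
- exact: matching_pair_mate.
- by rewrite !subUset !sub1set yA zA (subset_trans sub subA).
- rewrite !cardsU1 in_setU1 (negbTE (edge_neq eyz)) (negbTE yNm) zNm.
  by case: (z \in S) le => /=; lia.
Qed.

(* f m is too small to dominate x on its own. *)
Lemma DRD_helper (f : {ffun V -> 'I_4}) x m : DRD e f ->
  f x <= 1 -> f x + f m <= 2 -> exists h, [&& e x h, 2 <= f h & h != m].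
Proof.
move=> /forallP/(_ x)/andP[dom0 dom1].
case fx: (f x : nat) => [|[|//]] _ fm; last first.
  case/existsP: (implyP dom1 (introT eqP fx)) => h /andP[exh fh].
  by exists h; rewrite exh fh; apply: contraTneq fh => ->; lia.
case/orP: (implyP dom0 (introT eqP fx)) => [/existsP[h /andP[exh /eqP fh]]|].
  by exists h; rewrite exh fh /=; apply/eqP => hm; rewrite -hm fh in fm.
case/existsP => u /existsP[w /and5P[uw exu exw /eqP fu /eqP fw]].
have [um|um] := eqVneq u m.
  by exists w; rewrite exw fw -um eq_sym uw.
by exists u; rewrite exu fu um.
Qed.

Section Charges.
Variables (f : {ffun V -> 'I_4}) (mate : V -> V).
Hypotheses (f_oidrd : OIDRD e f) (mate_matching : matching mate).

Definition needy := [set x | (f x <= 1) && [exists h, [&& e x h, 2 <= f h & h != mate x]]].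

Definition helper x := odflt x [pick h | [&& e x h, 2 <= f h & h != mate x]].

Lemma helperP x : x \in needy -> [&& e x (helper x), 2 <= f (helper x) & helper x != mate x].
Proof.
rewrite inE /helper => /andP[_ /existsP[h hP]].
by case: pickP => [//|/(_ h)]; rewrite hP.
Qed.

Lemma needyP x : f x <= 1 -> f x + f (mate x) <= 2 -> x \in needy.
Proof.
move=> fx fxm; rewrite inE fx; apply/existsP.
have /andP[f_drd _] := f_oidrd.
by have [h hP] := DRD_helper f_drd fx fxm; exists h.
Qed.

Definition charge v := f v + (v \in needy).

Lemma charge_fixed v : mate v = v -> 1 <= charge v.
Proof.
rewrite /charge; case fv: (f v : nat) => [|//] mv.
by rewrite needyP ?fv // mv fv.
Qed.

Lemma charge_pair v : v \in moved mate -> 3 <= charge v + charge (mate v).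
Proof.
case: mate_matching => mateK me vM.
have not_both0 : ~~ ((f v == 0 :> nat) && (f (mate v) == 0 :> nat)).
  have /andP[_ /forallP/(_ v)/forallP/(_ (mate v))] := f_oidrd.
  by rewrite (me v vM) /= implybF.
have nv := @needyP v; have nm := @needyP (mate v); rewrite mateK in nm.
rewrite /charge; move: not_both0 nv nm.
case: (v \in needy); case: (mate v \in needy) => /=; lia.
Qed.

Lemma sum_charge : \sum_v charge v = weight f + #|needy|.
Proof. by rewrite big_split -sum1_card [in RHS]big_mkcond. Qed.

Lemma sum_charge_ge : #|moved mate| + 2 * #|V| <= 2 * \sum_v charge v.
Proof.
case: mate_matching => mateK _; set M := moved mate.
have sum_mate : \sum_(v in M) charge (mate v) = \sum_(v in M) charge v.
  by rewrite [RHS](reindex_inj (can_inj mateK)); apply: eq_bigl => v; rewrite moved_mate.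
have sumM : 3 * #|M| <= 2 * \sum_(v in M) charge v.
  rewrite mul2n -addnn -{1}sum_mate -big_split mulnC -sum_nat_const.
  by apply: leq_sum => v vM; rewrite /= addnC charge_pair.
have sumMC : #|~: M| <= \sum_(v | v \notin M) charge v.
  rewrite -sum1_card (eq_bigl (fun v => v \notin M)) => [|v]; last by rewrite inE.
  by apply: leq_sum => v; rewrite inE negbK => /eqP; apply: charge_fixed.
by have := cardsC M; rewrite (bigID (mem M)) /=; lia.
Qed.

Lemma card_helper_arcs : #|moved mate| + 2 * #|needy| <= #|arcs [set: V]|.
Proof.
case: mate_matching => mateK me; set M := moved mate.
have helperN x : x \in needy -> helper x \notin needy.
  by case/helperP/and3P => _ fh _; rewrite inE negb_and -ltnNge fh.
pose mat := [set (v, mate v) | v in M].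
pose out := [set (x, helper x) | x in needy].
pose back := [set (helper x, x) | x in needy].
have cardsU_disj (A B : {set V * V}) :
    (forall p, p \in A -> p \notin B) -> #|A :|: B| = #|A| + #|B|.
  move=> AB; apply/eqP; rewrite (leq_card_setU A B).2.
  by apply/pred0P => p /=; apply/negbTE/andP => -[/AB/negP].
have out_back p : p \in out -> p \notin back.
  case/imsetP => x xN ->; apply/imsetP => -[y yN [xE yE]].
  by move: (helperN y yN); rewrite -xE xN.
have mat_helpers p : p \in mat -> p \notin out :|: back.
  case/imsetP => v vM ->; rewrite in_setU; apply/norP; split; apply/imsetP => -[x xN [vE mE]].
    by case/and3P: (helperP xN) => _ _; rewrite -mE -vE eqxx.
  by case/and3P: (helperP xN) => _ _; rewrite -vE -mE mateK eqxx.
have sub : mat :|: (out :|: back) \subset arcs [set: V].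
  apply/subsetP => p; rewrite !in_setU => /or3P[] /imsetP[x xP ->]; rewrite !inE /=.
  - exact: me.
  - by case/and3P: (helperP xP).
  - by case/and3P: (helperP xP); rewrite e_sym.
have := subset_leq_card sub; rewrite !cardsU_disj // !card_imset; try by move=> ? ? [].
lia.
Qed.

Lemma weight_ge_matched : 0 < #|V| -> #|moved mate| + 1 <= weight f.
Proof.
have := card_arcs [set: V]; have := card_helper_arcs; have := sum_charge_ge.
by rewrite sum_charge cardsT; lia.
Qed.

End Charges.
End Forest.

Section Optima.
Variables (V : finType) (e : rel V).

Lemma vertex_coverT : vertex_cover e [set: V].
Proof. by apply/forallP => u; apply/forallP => v; rewrite inE implybT. Qed.

Lemma vc_number_min S : vertex_cover e S -> vc_number e <= #|S|.
Proof.
by rewrite /vc_number; case: arg_minnP => [|S0 _ S0min /S0min]; first exact: vertex_coverT.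
Qed.

Lemma vc_number_gt0 u v : e u v -> 0 < vc_number e.
Proof.
rewrite /vc_number; case: arg_minnP => [|S /forallP/(_ u)/forallP/(_ v) coverS _ euv].
  exact: vertex_coverT.
rewrite card_gt0; apply/set0Pn.
by case/orP: (implyP coverS euv) => [uS|vS]; [exists u | exists v].
Qed.

Lemma OIDRD_const2 : OIDRD e [ffun => two4].
Proof.
have two : (two4 : nat) = 2 by rewrite inordK.
apply/andP; split; apply/forallP => u; rewrite ?ffunE ?two //.
by apply/forallP => w; rewrite !ffunE two.
Qed.

Lemma gamma_oidR_min f : OIDRD e f -> gamma_oidR e <= weight f.
Proof.
by rewrite /gamma_oidR; case: arg_minnP => [|g _ gmin /gmin]; first exact: OIDRD_const2.
Qed.

Lemma gamma_oidR_witness : exists2 f, OIDRD e f & gamma_oidR e = weight f.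
Proof.
by rewrite /gamma_oidR; case: arg_minnP => [|g g_oidrd _]; [exact: OIDRD_const2 | exists g].
Qed.

End Optima.

Lemma gamma_oidR_tree_ge (V : finType) (e : rel V) :
  is_tree e -> 2 * vc_number e + 1 <= gamma_oidR e.
Proof.
case=> -[e_sym e_irr] V_gt0 _ e_acyc.
have [f f_oidrd ->] := gamma_oidR_witness e.
have [S [mate [coverS mate_matching _ le_S]]] := forest_konig e_sym e_irr e_acyc [set: V].
have /vc_number_min : vertex_cover e S.
  by apply/forallP => u; apply/forallP => v; apply/implyP; apply: coverS; rewrite inE.
have := weight_ge_matched e_sym e_irr e_acyc f_oidrd mate_matching V_gt0; lia.
Qed.

Definition K2 : rel bool := fun a b => a != b.

Lemma K2_tree : is_tree K2.
Proof.
split.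
- by split; [move=> [] [] | move=> []].
- by rewrite card_bool.
- move=> x y; have [->|nxy] := eqVneq x y; [exact: connect0 | exact: connect1].
- move=> s; rewrite /is_cycle; apply/negP => /and3P[s_gt2 /card_uniqP s_uniq _].
  by have := max_card (mem s); rewrite s_uniq card_bool leqNgt s_gt2.
Qed.

Lemma K2_gamma_oidR_le : gamma_oidR K2 <= 3.
Proof.
pose g : {ffun bool -> 'I_4} := [ffun b : bool => if b then inord 3 else inord 0].
have g_true : (g true : nat) = 3 by rewrite ffunE inordK.
have g_false : (g false : nat) = 0 by rewrite ffunE inordK.
have g_oidrd : OIDRD K2 g.
  apply/andP; split; apply/forallP => -[]; rewrite ?g_true ?g_false //=.
  - by rewrite andbT; apply/orP; left; apply/existsP; exists true; rewrite g_true.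
  - by apply/forallP.
  - by apply/forallP => -[]; rewrite ?g_true ?g_false.
by apply: leq_trans (gamma_oidR_min g_oidrd) _; rewrite /weight big_bool /= g_true g_false.
Qed.

Theorem theorem5 :
  (forall (V : finType) (e : rel V),
      is_tree e -> 2 * vc_number e + 1 <= gamma_oidR e)
  /\
  (exists (V : finType) (e : rel V),
      is_tree e /\ gamma_oidR e = 2 * vc_number e + 1).
Proof.
split; first exact: gamma_oidR_tree_ge.
exists _, K2; split; first exact: K2_tree.
apply/eqP; rewrite eqn_leq (gamma_oidR_tree_ge K2_tree) andbT.
by apply: leq_trans K2_gamma_oidR_le _; have := @vc_number_gt0 _ K2 true false isT; lia.
Qed.
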